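(* Let $n\ge 2$, $G=Sp(n+1)$, $K=\{\mathrm{diag}(B,q):B\in Sp(n),q\in Sp(1)\}$ and $N=\{\mathrm{diag}(A,q_1,q_2):A\in Sp(n-1),q_1,q_2\in Sp(1)\}$. Let $\Delta G\times K\times N$ act on $G\times G$ by $(g,k,h)\cdot(g_1,g_2)=(gg_1k^{-1},gg_2h^{-1})$. For $g\in G$ let $v(g)\in S^{4n+3}\subseteq\mathbb{H}^{n+1}$ be the last column of $g$, let $v_0(g)\in\mathbb{H}^{n-1}$ be the vector of its first $n-1$ entries, $v_n(g)$ its second-to-last entry and $v_{n+1}(g)$ its last entry. Then $(g_1,g_2)$ and $(h_1,h_2)$ lie in the same orbit if and only if $|v_i(g_2^{-1}g_1)|=|v_i(h_2^{-1}h_1)|$ for each $i\in\{0,n,n+1\}$.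
   Context: $Sp(m)$ denotes the group of $m\times m$ quaternionic unitary matrices; $|\cdot|$ is the standard norm on $\mathbb{H}^k$. *)

From HB Require Import structures.
From mathcomp Require Import all_boot all_order all_algebra.
From mathcomp Require Import ring.
From mathcomp Require Import reals.
Set Implicit Arguments. Unset Strict Implicit. Unset Printing Implicit Defensive.
Import Order.TTheory GRing.Theory Num.Theory.
Local Open Scope ring_scope.

Record quat (R : Type) := Quat { qa : R; qb : R; qc : R; qd : R }.

Section Quaternions.
Variable R : rcfType.

Definition quat2tup (q : quat R) := (qa q, qb q, qc q, qd q).
Definition tup2quat (t : R * R * R * R) :=
  let: (a, b, c, d) := t in Quat a b c d.
Lemma quat2tupK : cancel quat2tup tup2quat. Proof. by case. Qed.

HB.instance Definition _ := Choice.copy (quat R) (can_type quat2tupK).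

Definition qzero : quat R := Quat 0 0 0 0.
Definition qone : quat R := Quat 1 0 0 0.
Definition qadd (p q : quat R) :=
  Quat (qa p + qa q) (qb p + qb q) (qc p + qc q) (qd p + qd q).
Definition qopp (p : quat R) := Quat (- qa p) (- qb p) (- qc p) (- qd p).
(* Hamilton product: i^2 = j^2 = k^2 = ijk = -1 *)
Definition qmul (p q : quat R) :=
  Quat (qa p * qa q - qb p * qb q - qc p * qc q - qd p * qd q)
       (qa p * qb q + qb p * qa q + qc p * qd q - qd p * qc q)
       (qa p * qc q - qb p * qd q + qc p * qa q + qd p * qb q)
       (qa p * qd q + qb p * qc q - qc p * qb q + qd p * qa q).

Lemma qaddA : associative qadd.
Proof. by move=> [????] [????] [????]; rewrite /qadd /=; congr Quat; ring. Qed.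
Lemma qaddC : commutative qadd.
Proof. by move=> [????] [????]; rewrite /qadd /=; congr Quat; ring. Qed.
Lemma qadd0 : left_id qzero qadd.
Proof. by move=> [????]; rewrite /qadd /=; congr Quat; ring. Qed.
Lemma qaddN : left_inverse qzero qopp qadd.
Proof. by move=> [????]; rewrite /qadd /=; congr Quat; ring. Qed.

HB.instance Definition _ := GRing.isZmodule.Build (quat R) qaddA qaddC qadd0 qaddN.

Lemma qmulA : associative qmul.
Proof. by move=> [????] [????] [????]; rewrite /qmul /=; congr Quat; ring. Qed.
Lemma qmul1 : left_id qone qmul.
Proof. by move=> [????]; rewrite /qmul /=; congr Quat; ring. Qed.
Lemma qmulr1 : right_id qone qmul.
Proof. by move=> [????]; rewrite /qmul /=; congr Quat; ring. Qed.
Lemma qmulDl : left_distributive qmul qadd.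
Proof.
by move=> [????] [????] [????]; rewrite /qmul /qadd /=; congr Quat; ring.
Qed.
Lemma qmulDr : right_distributive qmul qadd.
Proof.
by move=> [????] [????] [????]; rewrite /qmul /qadd /=; congr Quat; ring.
Qed.
Lemma qone_neq0 : qone != 0.
Proof. by apply/eqP => -[] /eqP; rewrite oner_eq0. Qed.

HB.instance Definition _ :=
  GRing.Zmodule_isNzRing.Build (quat R) qmulA qmul1 qmulr1 qmulDl qmulDr qone_neq0.

Definition qconj (q : quat R) := Quat (qa q) (- qb q) (- qc q) (- qd q).
Definition qnorm2 (q : quat R) : R :=
  qa q ^+ 2 + qb q ^+ 2 + qc q ^+ 2 + qd q ^+ 2.
Definition qabs (q : quat R) : R := Num.sqrt (qnorm2 q).

Definition qadj m n (A : 'M[quat R]_(m, n)) : 'M[quat R]_(n, m) :=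
  map_mx qconj A^T.

(* Sp(m): the m x m quaternionic unitary matrices, A A^* = 1.  For such
   A, A^* is the (two-sided) inverse A^{-1}. *)
Definition is_Sp m (A : 'M[quat R]_m) : Prop := A *m qadj A = 1%:M.

Definition in_K n (k : 'M[quat R]_n.+1) : Prop :=
  exists (B : 'M[quat R]_n) (q : 'M[quat R]_1),
    is_Sp B /\ is_Sp q /\
    k = castmx (addn1 n, addn1 n) (block_mx B 0 0 q).

(* N = { diag(A, q1, q2) : A in Sp(n-1), q1, q2 in Sp(1) } inside Sp(n+1)
   (for n >= 1, so that (n-1)+1+1 = n+1) *)
Definition in_N n (h : 'M[quat R]_n.+1) : Prop :=
  exists (e : (n.-1 + 1 + 1 = n.+1)%N)
         (A : 'M[quat R]_n.-1) (q1 q2 : 'M[quat R]_1),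
    is_Sp A /\ is_Sp q1 /\ is_Sp q2 /\
    h = castmx (e, e) (block_mx (block_mx A 0 0 q1) 0 0 q2).

(* (h1,h2) lies in the orbit of (g1,g2) under Delta G x K x N acting by
   (g,k,h).(g1,g2) = (g g1 k^{-1}, g g2 h^{-1}); for unitary k, h the
   inverse is the conjugate transpose. *)
Definition same_orbit n (p1 p2 : 'M[quat R]_n.+1 * 'M[quat R]_n.+1) : Prop :=
  exists (g k h : 'M[quat R]_n.+1),
    is_Sp g /\ in_K k /\ in_N h /\
    p2.1 = g *m p1.1 *m qadj k /\ p2.2 = g *m p1.2 *m qadj h.

(* v(g) = last column of g in H^{n+1}; entries indexed 0..n (0-based). *)
Definition vlast n (g : 'M[quat R]_n.+1) : 'cV[quat R]_n.+1 := col ord_max g.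

Definition norm_v0 n (g : 'M[quat R]_n.+1) : R :=
  Num.sqrt (\sum_(i < n.+1 | (i < n.-1)%N) qabs (vlast g i 0) ^+ 2).
(* |v_n(g)|: modulus of the second-to-last entry (0-based index n-1) *)
Definition norm_vn n (g : 'M[quat R]_n.+1) : R :=
  qabs (vlast g (inord n.-1) 0).
Definition norm_vlast n (g : 'M[quat R]_n.+1) : R :=
  qabs (vlast g ord_max 0).

End Quaternions.

From mathcomp Require Import all_boot all_order all_algebra.
From mathcomp Require Import ring lra.
From mathcomp Require Import reals.
Set Implicit Arguments. Unset Strict Implicit. Unset Printing Implicit Defensive.
Import Order.TTheory GRing.Theory Num.Theory.
Local Open Scope ring_scope.

(* Writing X = g2^-1 g1, the orbit of (g1, g2) is determined by the double
   coset N X K.  Right multiplication by diag(B, q) in K multiplies the last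
   column v(X) on the right by the unit quaternion q^-1, and left
   multiplication by diag(A, q1, q2) in N acts blockwise on v(X); both preserve
   |v_0|, |v_n| and |v_n+1|.  Conversely, Sp(n-1) is transitive on spheres of
   H^(n-1) (by Householder reflections) and unit quaternions are transitive on
   spheres of H, so equal norms give h in N with h v(X) = v(Y).  Then
   k = Y^-1 h X fixes the last basis vector, hence lies in K, and Y = h X k^-1. *)

Definition qreal (R : rcfType) (r : R) : quat R := Quat r 0 0 0.

Lemma qmulE (R : rcfType) (p q : quat R) : p * q = qmul p q. Proof. by []. Qed.
Lemma qaddE (R : rcfType) (p q : quat R) : p + q = qadd p q. Proof. by []. Qed.
Lemma qoppE (R : rcfType) (p : quat R) : - p = qopp p. Proof. by []. Qed.
Lemma q0E (R : rcfType) : (0 : quat R) = Quat 0 0 0 0. Proof. by []. Qed.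
Lemma q1E (R : rcfType) : (1 : quat R) = Quat 1 0 0 0. Proof. by []. Qed.

Ltac quat_unfold := rewrite ?qmulE ?qaddE ?qoppE ?q0E ?q1E
  /qmul /qadd /qopp /qconj /qreal /qnorm2 /=.

Section Quaternion.
Variable R : rcfType.
Local Notation Q := (quat R).
Implicit Types (p q : Q) (r s : R).

Lemma qconjK : involutive (@qconj R).
Proof. by case=> a b c d; quat_unfold; congr Quat; ring. Qed.
Lemma qconjD p q : qconj (p + q) = qconj p + qconj q.
Proof. by case: p q => [????] [????]; quat_unfold; congr Quat; ring. Qed.
Lemma qconjN p : qconj (- p) = - qconj p.
Proof. by case: p => ????; quat_unfold; congr Quat; ring. Qed.
Lemma qconj0 : qconj (0 : Q) = 0.
Proof. by quat_unfold; congr Quat; ring. Qed.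
Lemma qconj1 : qconj (1 : Q) = 1.
Proof. by quat_unfold; congr Quat; ring. Qed.
Lemma qconjM p q : qconj (p * q) = qconj q * qconj p.
Proof. by case: p q => [????] [????]; quat_unfold; congr Quat; ring. Qed.
Lemma qconj_sum I (r : seq I) (P : pred I) (F : I -> Q) :
  qconj (\sum_(i <- r | P i) F i) = \sum_(i <- r | P i) qconj (F i).
Proof. exact: (big_morph _ qconjD qconj0). Qed.

Lemma qrealD r s : qreal (r + s) = qreal r + qreal s.
Proof. by quat_unfold; congr Quat; ring. Qed.
Lemma qrealN r : qreal (- r) = - qreal r.
Proof. by quat_unfold; congr Quat; ring. Qed.
Lemma qrealM r s : qreal (r * s) = qreal r * qreal s.
Proof. by quat_unfold; congr Quat; ring. Qed.
Lemma qreal1 : qreal 1 = 1 :> Q. Proof. by []. Qed.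
Lemma qreal_sum I (r : seq I) (P : pred I) (F : I -> R) :
  qreal (\sum_(i <- r | P i) F i) = \sum_(i <- r | P i) qreal (F i).
Proof. exact: (big_morph _ qrealD (erefl (qreal 0))). Qed.
Lemma qreal_inj : injective (@qreal R).
Proof. by move=> r s [->]. Qed.
Lemma qconj_real r : qconj (qreal r) = qreal r.
Proof. by quat_unfold; congr Quat; ring. Qed.
Lemma qreal_comm r p : qreal r * p = p * qreal r.
Proof. by case: p => ????; quat_unfold; congr Quat; ring. Qed.

Lemma qmul_conj p : p * qconj p = qreal (qnorm2 p).
Proof. by case: p => ????; quat_unfold; congr Quat; ring. Qed.
Lemma qconj_mul p : qconj p * p = qreal (qnorm2 p).
Proof. by case: p => ????; quat_unfold; congr Quat; ring. Qed.

Lemma qnorm2M p q : qnorm2 (p * q) = qnorm2 p * qnorm2 q.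
Proof. by case: p q => [????] [????]; quat_unfold; ring. Qed.
Lemma qnorm2_real r : qnorm2 (qreal r) = r ^+ 2.
Proof. by quat_unfold; ring. Qed.
Lemma qnorm2_0 : qnorm2 (0 : Q) = 0.
Proof. by quat_unfold; ring. Qed.
Lemma qnorm2_1 : qnorm2 (1 : Q) = 1.
Proof. by quat_unfold; ring. Qed.
Lemma qnorm2_ge0 p : 0 <= qnorm2 p.
Proof. by case: p => ????; quat_unfold; rewrite !addr_ge0 // sqr_ge0. Qed.
Lemma qnorm2_eq0 p : qnorm2 p = 0 -> p = 0.
Proof.
case: p => a b c d; rewrite /qnorm2 /= => h.
have sq0 (x : R) : x ^+ 2 = 0 -> x = 0 by move/eqP; rewrite sqrf_eq0 => /eqP.
have ha : a = 0 by apply: sq0; nra.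
have hb : b = 0 by apply: sq0; nra.
have hc : c = 0 by apply: sq0; nra.
have hd : d = 0 by apply: sq0; nra.
by rewrite ha hb hc hd.
Qed.

Lemma qabs2 p : qabs p ^+ 2 = qnorm2 p.
Proof. by rewrite sqr_sqrtr // qnorm2_ge0. Qed.

Lemma qnorm2_unit p : p * qconj p = 1 -> qnorm2 p = 1.
Proof. by move=> h; apply: qreal_inj; rewrite -qmul_conj h. Qed.

Lemma qunit_transitive p q : qnorm2 p = qnorm2 q ->
  exists d : Q, d * qconj d = 1 /\ d * p = q.
Proof.
move=> hpq; have [p0|p0] := eqVneq p 0.
  exists 1; rewrite qconj1 mulr1 mul1r; split => //.
  by rewrite p0; apply/esym/qnorm2_eq0; rewrite -hpq p0 qnorm2_0.
have np0 : qnorm2 p != 0 by apply: contra_neq p0 => /qnorm2_eq0.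
have tpp : qreal (qnorm2 p)^-1 * (qconj p * p) = 1.
  by rewrite qconj_mul -qrealM mulVf.
exists (q * qreal (qnorm2 p)^-1 * qconj p); split; last first.
  by rewrite -!mulrA tpp mulr1.
rewrite !qconjM qconjK qconj_real.
have -> : q * qreal (qnorm2 p)^-1 * qconj p * (p * (qreal (qnorm2 p)^-1 * qconj q))
    = q * (qreal (qnorm2 p)^-1 * (qconj p * p)) * (qreal (qnorm2 p)^-1 * qconj q).
  by rewrite !mulrA.
by rewrite tpp mulr1 qreal_comm mulrA qmul_conj -qrealM -hpq mulfV.
Qed.

End Quaternion.

Section RealRepresentation.
Variable R : rcfType.
Local Notation Q := (quat R).

Definition qcoord (x : Q) (t : 'I_4) : R :=
  match val t with 0 => qa x | 1 => qb x | 2 => qc x | _ => qd x end.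
Definition qbasis (t : 'I_4) : Q :=
  match val t with
  | 0 => Quat 1 0 0 0 | 1 => Quat 0 1 0 0 | 2 => Quat 0 0 1 0 | _ => Quat 0 0 0 1
  end.
Definition qlmx (p : Q) (s t : 'I_4) : R := qcoord (p * qbasis t) s.

Lemma qcoord_inj (x y : Q) : (forall t, qcoord x t = qcoord y t) -> x = y.
Proof.
case: x y => [a b c d] [a' b' c' d'] h.
by move: (h 0) (h 1) (h 2) (h 3); rewrite /qcoord /= => -> -> -> ->.
Qed.

Lemma qcoordD (x y : Q) t : qcoord (x + y) t = qcoord x t + qcoord y t.
Proof. by case: t => [[|[|[|[|t]]]] ?]. Qed.

Lemma qcoord0 t : qcoord 0 t = 0.
Proof. by case: t => [[|[|[|[|t]]]] ?]. Qed.

Lemma qlmx_mul p q s t : \sum_(u < 4) qlmx p s u * qlmx q u t = qlmx (p * q) s t.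
Proof.
rewrite !big_ord_recr big_ord0 /= add0r.
case: p q => [????] [????].
case: s => [[|[|[|[|s]]]] ?] //; case: t => [[|[|[|[|t]]]] ?] //;
by rewrite /qlmx /qcoord /qbasis /= ?qmulE /qmul /=; ring.
Qed.

Lemma qlmx_sum I (r : seq I) (P : pred I) (F : I -> Q) s t :
  qlmx (\sum_(i <- r | P i) F i) s t = \sum_(i <- r | P i) qlmx (F i) s t.
Proof.
elim/big_rec2: _ => [|i y1 y2 _ <-]; first by rewrite /qlmx mul0r qcoord0.
by rewrite /qlmx mulrDl qcoordD.
Qed.

Lemma qlmx1 s t : qlmx 1 s t = (s == t)%:R.
Proof.
rewrite /qlmx mul1r.
by case: s => [[|[|[|[|s]]]] ?] //; case: t => [[|[|[|[|t]]]] ?].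
Qed.

Lemma qlmx0 s t : qlmx 0 s t = 0.
Proof. by rewrite /qlmx mul0r qcoord0. Qed.

Lemma qlmx_coord x s : qlmx x s 0 = qcoord x s.
Proof. by rewrite /qlmx mulr1. Qed.

Variable n : nat.
Local Notation I := ('I_n * 'I_4)%type.
Definition realmx_idx (i : 'I_#|{: I}|) : I := enum_val i.
Local Notation idx := realmx_idx.

Definition realmx (A : 'M[Q]_n) : 'M[R]_#|{: I}| :=
  \matrix_(i, j) qlmx (A (idx i).1 (idx j).1) (idx i).2 (idx j).2.

Lemma realmx_mul (A B : 'M[Q]_n) : realmx (A *m B) = realmx A *m realmx B.
Proof.
apply/matrixP => i j; rewrite !mxE qlmx_sum.
under [RHS]eq_bigr do rewrite !mxE.
rewrite /realmx_idx -(big_enum_val (A := {: I}) (fun k =>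
  qlmx (A (idx i).1 k.1) (idx i).2 k.2 * qlmx (B k.1 (idx j).1) k.2 (idx j).2)).
rewrite -(pair_big xpredT xpredT (fun a b =>
  qlmx (A (idx i).1 a) (idx i).2 b * qlmx (B a (idx j).1) b (idx j).2)) /=.
by apply: eq_bigr => a _; rewrite qlmx_mul.
Qed.

Lemma realmx1 : realmx 1%:M = 1%:M.
Proof.
apply/matrixP => i j; rewrite !mxE.
have -> : (i == j) = ((idx i).1 == (idx j).1) && ((idx i).2 == (idx j).2).
  by rewrite -xpair_eqE -!surjective_pairing (inj_eq enum_val_inj).
by case: eqP => _; rewrite ?mulr1n ?mulr0n ?qlmx1 ?qlmx0.
Qed.

Lemma realmx_inj : injective realmx.
Proof.
move=> A B /matrixP eqAB; apply/matrixP => a b; apply: qcoord_inj => t.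
move: (eqAB (enum_rank (a, t)) (enum_rank (b, 0 : 'I_4))).
by rewrite !mxE /realmx_idx !enum_rankK /= !qlmx_coord.
Qed.

End RealRepresentation.

Lemma col_mulmx (T : pzSemiRingType) m n p (A : 'M[T]_(m, n)) (B : 'M[T]_(n, p)) j :
  col j (A *m B) = A *m col j B.
Proof. by apply/matrixP => i l; rewrite !mxE; apply: eq_bigr => k _; rewrite !mxE. Qed.

Section QuatMatrix.
Variable R : rcfType.
Local Notation Q := (quat R).

Lemma qadjE m n (A : 'M[Q]_(m, n)) i j : qadj A i j = qconj (A j i).
Proof. by rewrite !mxE. Qed.

Lemma qadjK m n (A : 'M[Q]_(m, n)) : qadj (qadj A) = A.
Proof. by apply/matrixP => i j; rewrite !qadjE qconjK. Qed.

Lemma qadj0 m n : qadj (0 : 'M[Q]_(m, n)) = 0.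
Proof. by apply/matrixP => i j; rewrite !mxE qconj0. Qed.

Lemma qadjD m n (A B : 'M[Q]_(m, n)) : qadj (A + B) = qadj A + qadj B.
Proof. by apply/matrixP => i j; rewrite !mxE qconjD. Qed.

Lemma qadjN m n (A : 'M[Q]_(m, n)) : qadj (- A) = - qadj A.
Proof. by apply/matrixP => i j; rewrite !mxE qconjN. Qed.

Lemma qadjM m n p (A : 'M[Q]_(m, n)) (B : 'M[Q]_(n, p)) :
  qadj (A *m B) = qadj B *m qadj A.
Proof.
apply/matrixP => i j; rewrite qadjE !mxE qconj_sum.
by apply: eq_bigr => k _; rewrite qconjM !qadjE.
Qed.

Lemma qadj_scalar n (x : Q) : qadj (x%:M : 'M_n) = (qconj x)%:M.
Proof.
apply/matrixP => i j; rewrite qadjE !mxE eq_sym.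
by case: eqP => _; rewrite ?mulr1n ?mulr0n ?qconj0.
Qed.

Lemma Sp1 n : is_Sp (1%:M : 'M[Q]_n).
Proof. by rewrite /is_Sp qadj_scalar qconj1 mulmx1. Qed.

Lemma Sp_mul n (A B : 'M[Q]_n) : is_Sp A -> is_Sp B -> is_Sp (A *m B).
Proof. by move=> hA hB; rewrite /is_Sp qadjM mulmxA -(mulmxA A) hB mulmx1. Qed.

(* The quaternions are not commutative, so [mulmx1C] only applies after
   passing to the real representation. *)
Lemma Sp_mulVmx n (A : 'M[Q]_n) : is_Sp A -> qadj A *m A = 1%:M.
Proof.
move=> hA; apply: realmx_inj; rewrite realmx_mul realmx1.
by apply: mulmx1C; rewrite -realmx_mul hA realmx1.
Qed.

Lemma Sp_adj n (A : 'M[Q]_n) : is_Sp A -> is_Sp (qadj A).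
Proof. by move=> hA; rewrite /is_Sp qadjK Sp_mulVmx. Qed.

Lemma Sp_diag n (d : 'I_n -> Q) : (forall i, d i * qconj (d i) = 1) ->
  is_Sp (diag_mx (\row_i d i)).
Proof.
move=> hd; rewrite /is_Sp mul_diag_mx; apply/matrixP => i j; rewrite !mxE.
case: eqP => [->|/eqP ij]; first by rewrite eqxx hd.
by rewrite eq_sym (negPf ij) qconj0 mulr0.
Qed.

Definition vnorm2 p (v : 'cV[Q]_p) : R := \sum_i qnorm2 (v i 0).

Lemma vnorm2_ge0 p (v : 'cV[Q]_p) : 0 <= vnorm2 v.
Proof. by apply: sumr_ge0 => i _; apply: qnorm2_ge0. Qed.

Lemma vnorm2_eq0 p (v : 'cV[Q]_p) : vnorm2 v = 0 -> v = 0.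
Proof.
move=> h; apply/matrixP => i j; rewrite ord1 mxE; apply: qnorm2_eq0.
exact: (psumr_eq0P (fun k _ => qnorm2_ge0 (v k 0)) h).
Qed.

Lemma qadj_mulvv p (v : 'cV[Q]_p) : qadj v *m v = (qreal (vnorm2 v))%:M.
Proof.
apply/matrixP => i j; rewrite !ord1 !mxE mulr1n qreal_sum.
by apply: eq_bigr => k _; rewrite qadjE qconj_mul.
Qed.

Lemma vnorm2_Sp_mul p (A : 'M[Q]_p) (v : 'cV[Q]_p) :
  is_Sp A -> vnorm2 (A *m v) = vnorm2 v.
Proof.
move=> /Sp_mulVmx hA; apply: qreal_inj.
have qrealE (w : 'cV[Q]_p) : qreal (vnorm2 w) = (qadj w *m w) 0 0.
  by rewrite qadj_mulvv mxE mulr1n.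
by rewrite !qrealE qadjM -mulmxA (mulmxA (qadj A)) hA mul1mx.
Qed.

End QuatMatrix.

Section Householder.
Variable R : rcfType.
Local Notation Q := (quat R).
Local Notation S r := ((qreal r)%:M : 'M[Q]_1).

Lemma S_mul (a b : R) : S a *m S b = S (a * b).
Proof. by rewrite -scalar_mxM qrealM. Qed.
Lemma S_add (a b : R) : S a + S b = S (a + b).
Proof. by rewrite -raddfD qrealD. Qed.
Lemma S_sub (a b : R) : S a - S b = S (a - b).
Proof. by rewrite -raddfB qrealD qrealN. Qed.
Lemma S_inj : injective (fun a : R => S a).
Proof. by move=> a b /matrixP/(_ 0 0); rewrite !mxE !mulr1n => /qreal_inj. Qed.
Lemma qadj_S (a : R) : qadj (S a) = S a.
Proof. by rewrite qadj_scalar qconj_real. Qed.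

Variable p : nat.
Implicit Types v w y : 'cV[Q]_p.

Definition householder y : 'M[Q]_p := 1%:M - y *m S (2 / vnorm2 y) *m qadj y.

Lemma householder_Sp y : is_Sp (householder y).
Proof.
set c := 2 / vnorm2 y; set P := y *m S c *m qadj y.
have adjP : qadj P = P by rewrite /P !qadjM qadjK qadj_S mulmxA.
have cyc : c * vnorm2 y * c = c + c.
  rewrite /c; have [->|y0] := eqVneq (vnorm2 y) 0.
    by rewrite invr0 !mulr0 addr0.
  by field.
have PP : P *m P = P + P.
  have -> : P *m P = y *m (S c *m (qadj y *m y) *m S c) *m qadj y.
    by rewrite /P !mulmxA.
  by rewrite qadj_mulvv !S_mul cyc -S_add mulmxDr mulmxDl.
rewrite /is_Sp /householder -/c -/P qadjD qadjN qadj_scalar qconj1 adjP.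
by rewrite mulmxBl !mulmxBr !mul1mx !mulmx1 PP opprB addrK subrK.
Qed.

Lemma householder_reflect v w (r : R) : vnorm2 v = vnorm2 w ->
  qadj w *m v = S r -> householder (v - w) *m v = w.
Proof.
move=> vw wv; set y := v - w.
have vw' : qadj v *m w = S r by rewrite -[_ *m w]qadjK qadjM qadjK wv qadj_S.
have yv : qadj y *m v = S (vnorm2 v - r).
  by rewrite /y qadjD qadjN mulmxDl mulNmx qadj_mulvv wv S_sub.
have yy : vnorm2 y = 2 * (vnorm2 v - r).
  apply: S_inj; rewrite -qadj_mulvv /y qadjD qadjN !mulmxDl !mulmxDr !mulNmx.
  rewrite !mulmxN !qadj_mulvv wv vw' opprK -vw.
  apply/matrixP => i j; rewrite !ord1 !mxE !mulr1n -!qrealN -!qrealD.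
  by congr qreal; ring.
have [y0|y0] := eqVneq (vnorm2 y) 0.
  move/vnorm2_eq0: y0 => y0.
  by rewrite /householder y0 !mul0mx subr0 mul1mx; apply/eqP; rewrite -subr_eq0 -/y y0.
rewrite /householder mulmxBl mul1mx -!mulmxA yv S_mul.
have -> : 2 / vnorm2 y * (vnorm2 v - r) = 1.
  by rewrite yy; field; apply: contra_neq y0 => h; rewrite yy h mulr0.
by rewrite mulmx1 /y opprB addrC subrK.
Qed.

End Householder.

Section Transitivity.
Variable R : rcfType.
Local Notation Q := (quat R).

Definition qe0 p (c : Q) : 'cV[Q]_p.+1 := \col_i (if i == ord0 then c else 0).

Lemma vnorm2_qe0 p c : vnorm2 (qe0 p c) = qnorm2 c.
Proof.
rewrite /vnorm2 big_ord_recl mxE eqxx big1 ?addr0 // => i _.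
by rewrite mxE eq_sym (negPf (neq_lift _ _)) qnorm2_0.
Qed.

Lemma qadj_qe0_mul p c (v : 'cV[Q]_p.+1) :
  qadj (qe0 p c) *m v = (qconj c * v ord0 0)%:M.
Proof.
apply/matrixP => i j; rewrite !ord1 !mxE mulr1n big_ord_recl big1 ?addr0.
  by rewrite !mxE eqxx.
by move=> k _; rewrite !mxE eq_sym (negPf (neq_lift _ _)) qconj0 mul0r.
Qed.

(* The witness is the first entry of [v] rescaled to norm [|v|], so that
   [c^* v_0] is real. *)
Lemma exists_qe0_real_pairing p (v : 'cV[Q]_p.+1) :
  exists c, qnorm2 c = vnorm2 v /\
            exists r, qadj (qe0 p c) *m v = (qreal r)%:M.
Proof.
have hs : Num.sqrt (vnorm2 v) ^+ 2 = vnorm2 v by rewrite sqr_sqrtr // vnorm2_ge0.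
have [v0|v0] := eqVneq (v ord0 0) 0.
  exists (qreal (Num.sqrt (vnorm2 v))); rewrite qnorm2_real hs; split => //.
  by exists 0; rewrite qadj_qe0_mul v0 mulr0.
have nv0 : qnorm2 (v ord0 0) != 0 by apply: contra_neq v0 => /qnorm2_eq0.
pose t := Num.sqrt (vnorm2 v) / qabs (v ord0 0).
exists (v ord0 0 * qreal t); split.
  by rewrite qnorm2M qnorm2_real /t expr_div_n qabs2 hs mulrCA mulfV ?mulr1.
exists (t * qnorm2 (v ord0 0)).
by rewrite qadj_qe0_mul qconjM qconj_real -mulrA qconj_mul -qrealM.
Qed.

Lemma Sp_transitive p (v w : 'cV[Q]_p) : vnorm2 v = vnorm2 w ->
  exists A, is_Sp A /\ A *m v = w.
Proof.
case: p v w => [|p] v w vw.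
  by exists 1%:M; split; [exact: Sp1 | rewrite mul1mx !flatmx0].
have [c [vc [r vr]]] := exists_qe0_real_pairing v.
have [c' [wc' [r' wr']]] := exists_qe0_real_pairing w.
have Hv := householder_reflect (esym (etrans (vnorm2_qe0 p c) vc)) vr.
have Hw := householder_reflect (esym (etrans (vnorm2_qe0 p c') wc')) wr'.
have [d [dd dc]] := qunit_transitive (etrans vc (etrans vw (esym wc'))).
pose D : 'M[Q]_p.+1 := diag_mx (\row_i if i == ord0 then d else 1).
have SpD : is_Sp D.
  by apply: Sp_diag => i; case: eqP => _ //; rewrite qconj1 mulr1.
have Dc : D *m qe0 p c = qe0 p c'.
  rewrite mul_diag_mx; apply/matrixP => i j; rewrite !mxE.
  by case: eqP => _; rewrite ?mulr0 ?mul1r.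
exists (qadj (householder (w - qe0 p c')) *m D *m householder (v - qe0 p c)).
split.
  by apply: Sp_mul; [apply: Sp_mul => //; apply: Sp_adj|]; apply: householder_Sp.
rewrite -mulmxA Hv -mulmxA Dc -{2}Hw mulmxA Sp_mulVmx ?mul1mx //.
exact: householder_Sp.
Qed.

End Transitivity.

Section BlockDiagonal.
Variable R : rcfType.
Local Notation Q := (quat R).

Lemma Sp_castmx m m' (e : m = m') (A : 'M[Q]_m) :
  is_Sp (castmx (e, e) A) <-> is_Sp A.
Proof. by case: m' / e. Qed.

Lemma Sp_block_diag m n (B : 'M[Q]_m) (q : 'M[Q]_n) :
  is_Sp (block_mx B 0 0 q) <-> is_Sp B /\ is_Sp q.
Proof.
rewrite /is_Sp /qadj tr_block_mx map_block_mx -!/(qadj _) !qadj0 mulmx_block.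
rewrite !mulmx0 !mul0mx !addr0 !add0r scalar_mx_block.
by split => [/eq_block_mx[-> _ _ ->] | [-> ->]].
Qed.

Lemma block_mx_castmx a b c (e : a = b) (A : 'M[Q]_a) (q : 'M[Q]_c) :
  block_mx (castmx (e, e) A) 0 0 q
  = castmx (congr1 (addn^~ c) e, congr1 (addn^~ c) e) (block_mx A 0 0 q).
Proof. by case: b / e. Qed.

Variable n : nat.
Local Notation wd := (widen_ord (leqnSn n)).

Definition blkdiag (B : 'M[Q]_n) (q : 'M[Q]_1) : 'M[Q]_n.+1 :=
  castmx (addn1 n, addn1 n) (block_mx B 0 0 q).

Lemma Sp_blkdiag B q : is_Sp (blkdiag B q) <-> is_Sp B /\ is_Sp q.
Proof. by rewrite Sp_castmx Sp_block_diag. Qed.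

Lemma cast_widen i : cast_ord (esym (addn1 n)) (wd i) = lshift 1 i.
Proof. exact: val_inj. Qed.
Lemma cast_ord_max : cast_ord (esym (addn1 n)) ord_max = rshift n ord0.
Proof. by apply: val_inj; rewrite /= addn0. Qed.

Lemma blkdiagEul B q i j : blkdiag B q (wd i) (wd j) = B i j.
Proof. by rewrite castmxE !cast_widen block_mxEul. Qed.
Lemma blkdiagEur B q i : blkdiag B q (wd i) ord_max = 0.
Proof. by rewrite castmxE cast_widen cast_ord_max block_mxEur mxE. Qed.
Lemma blkdiagEdl B q j : blkdiag B q ord_max (wd j) = 0.
Proof. by rewrite castmxE cast_widen cast_ord_max block_mxEdl mxE. Qed.
Lemma blkdiagEdr B q : blkdiag B q ord_max ord_max = q 0 0.
Proof. by rewrite castmxE cast_ord_max block_mxEdr. Qed.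

Lemma ord_max_or_widen (i : 'I_n.+1) : i = ord_max \/ exists j, i = wd j.
Proof.
case: (ltnP i n) => h; first by right; exists (Ordinal h); apply: val_inj.
by left; apply: val_inj => /=; apply/eqP; rewrite eqn_leq h -ltnS ltn_ord.
Qed.

Lemma widen_neq_max i : (wd i == ord_max) = false.
Proof. by apply/negbTE; rewrite -val_eqE /= neq_ltn ltn_ord. Qed.

Lemma blkdiag_corner (k : 'M[Q]_n.+1) :
  (forall i, k (wd i) ord_max = 0) -> (forall j, k ord_max (wd j) = 0) ->
  k = blkdiag (\matrix_(i, j) k (wd i) (wd j)) (k ord_max ord_max)%:M.
Proof.
move=> kur kdl; apply/matrixP => i j.
case: (ord_max_or_widen i) => [->|[i' ->]]; case: (ord_max_or_widen j) => [->|[j' ->]].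
- by rewrite blkdiagEdr mxE.
- by rewrite blkdiagEdl kdl.
- by rewrite blkdiagEur kur.
- by rewrite blkdiagEul mxE.
Qed.

Definition vbelast (v : 'cV[Q]_n.+1) : 'cV[Q]_n := \col_i v (wd i) 0.

Lemma vbelast_blkdiag_mul B q (v : 'cV[Q]_n.+1) :
  vbelast (blkdiag B q *m v) = B *m vbelast v.
Proof.
apply/matrixP => i j; rewrite ord1 !mxE big_ord_recr /= blkdiagEur mul0r addr0.
by apply: eq_bigr => l _; rewrite blkdiagEul mxE.
Qed.

Lemma blkdiag_mul_last B q (v : 'cV[Q]_n.+1) :
  (blkdiag B q *m v) ord_max 0 = q 0 0 * v ord_max 0.
Proof.
rewrite mxE big_ord_recr /= blkdiagEdr big1 ?add0r // => l _.
by rewrite blkdiagEdl mul0r.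
Qed.

Lemma col_eq_belast (v w : 'cV[Q]_n.+1) :
  vbelast v = vbelast w -> v ord_max 0 = w ord_max 0 -> v = w.
Proof.
move=> /matrixP vw vwn; apply/matrixP => i j; rewrite ord1.
case: (ord_max_or_widen i) => [->|[i' ->]] //.
by move: (vw i' 0); rewrite !mxE.
Qed.

End BlockDiagonal.

Section Subgroups.
Variable R : rcfType.
Local Notation Q := (quat R).

Variable m : nat.
Local Notation wd := (widen_ord (leqnSn m)).

Lemma vlast_mul (A B : 'M[Q]_m.+1) : vlast (A *m B) = A *m vlast B.
Proof. exact: col_mulmx. Qed.

Lemma vlast_mul_adj_blkdiag (M : 'M[Q]_m.+1) B q :
  vlast (M *m qadj (blkdiag B q)) = vlast M *m qadj q.
Proof.
apply/matrixP => i j; rewrite ord1 !mxE big_ord_recr big_ord1 /= !mxE blkdiagEdr.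
by rewrite big1 ?add0r // => l _; rewrite !mxE blkdiagEdl qconj0 mulr0.
Qed.

Lemma in_K_of_vlast (k : 'M[Q]_m.+1) : is_Sp k -> vlast k = vlast 1%:M -> in_K k.
Proof.
move=> Spk /matrixP kcol.
have kur i : k (wd i) ord_max = 0.
  by move: (kcol (wd i) 0); rewrite !mxE widen_neq_max.
have kdr : k ord_max ord_max = 1 by move: (kcol ord_max 0); rewrite !mxE eqxx.
(* The last row is a unit vector whose last entry already has norm 1. *)
have kdl j : k ord_max (wd j) = 0.
  move/matrixP: (Spk) => /(_ ord_max ord_max); rewrite !mxE eqxx mulr1n.
  under eq_bigr do rewrite !mxE qmul_conj.
  rewrite -qreal_sum -qreal1 => /qreal_inj; rewrite big_ord_recr /= kdr qnorm2_1.
  move/(congr1 (fun x => x - 1)); rewrite addrK subrr => row0.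
  exact/qnorm2_eq0/(psumr_eq0P (fun l _ => qnorm2_ge0 _) row0).
have kE := blkdiag_corner kur kdl.
have [SpB Spq] : is_Sp (\matrix_(i, j) k (wd i) (wd j)) /\
                 is_Sp ((k ord_max ord_max)%:M : 'M[Q]_1).
  by apply/Sp_blkdiag; rewrite -kE.
by exists (\matrix_(i, j) k (wd i) (wd j)), (k ord_max ord_max)%:M.
Qed.

Lemma in_NE (h : 'M[Q]_m.+3) : in_N h <->
  exists A q1 q2, [/\ is_Sp A, is_Sp q1, is_Sp q2 & h = blkdiag (blkdiag A q1) q2].
Proof.
have blkdiag2E (e : (m.+1 + 1 + 1 = m.+3)%N) A (q1 q2 : 'M[Q]_1) :
    castmx (e, e) (block_mx (block_mx A 0 0 q1) 0 0 q2)
    = blkdiag (blkdiag A q1) q2.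
  by rewrite /blkdiag block_mx_castmx castmx_comp; apply: eq_castmx.
split=> [[e [A [q1 [q2 [SpA [Spq1 [Spq2 ->]]]]]]] | [A [q1 [q2 [SpA Spq1 Spq2 ->]]]]].
  by exists A, q1, q2; rewrite blkdiag2E.
have e : (m.+1 + 1 + 1 = m.+3)%N by rewrite !addn1.
by exists e, A, q1, q2; rewrite blkdiag2E.
Qed.

Lemma in_N_Sp (h : 'M[Q]_m.+1) : in_N h -> is_Sp h.
Proof.
case=> e [A [q1 [q2 [SpA [Spq1 [Spq2 ->]]]]]].
by apply/Sp_castmx/Sp_block_diag; rewrite Sp_block_diag.
Qed.

End Subgroups.

Section NormTriple.
Variable R : rcfType.
Local Notation Q := (quat R).

Lemma Sp1_qnorm2 (q : 'M[Q]_1) : is_Sp q -> qnorm2 (q 0 0) = 1.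
Proof.
by move/matrixP/(_ 0 0); rewrite mxE big_ord1 !mxE eqxx mulr1n; apply: qnorm2_unit.
Qed.

(* (|v_0|^2, |v_n|^2, |v_n+1|^2) in the notation of the statement *)
Definition norm_triple m (v : 'cV[Q]_m.+2) : R * R * R :=
  (vnorm2 (vbelast (vbelast v)), qnorm2 (vbelast v ord_max 0), qnorm2 (v ord_max 0)).

Lemma norm_triple_mul_Sp1 m (v : 'cV[Q]_m.+2) (q : 'M[Q]_1) :
  is_Sp q -> norm_triple (v *m q) = norm_triple v.
Proof.
move=> /Sp1_qnorm2 q1.
have vq i : qnorm2 (\sum_(l < 1) v i l * q l 0) = qnorm2 (v i 0).
  by rewrite big_ord1 qnorm2M q1 mulr1.
rewrite /norm_triple /vnorm2; congr (_, _, _); last by rewrite mxE vq.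
  by apply: eq_bigr => i _; rewrite !mxE vq.
by rewrite !mxE vq.
Qed.

Lemma norm_triple_N_mul m A (q1 q2 : 'M[Q]_1) (v : 'cV[Q]_m.+2) :
  is_Sp A -> is_Sp q1 -> is_Sp q2 ->
  norm_triple (blkdiag (blkdiag A q1) q2 *m v) = norm_triple v.
Proof.
move=> SpA /Sp1_qnorm2 q1n /Sp1_qnorm2 q2n.
by rewrite /norm_triple !vbelast_blkdiag_mul vnorm2_Sp_mul // !blkdiag_mul_last
  !qnorm2M q1n q2n !mul1r.
Qed.

Lemma norm_triple_N_transitive m (v w : 'cV[Q]_m.+3) :
  norm_triple v = norm_triple w -> exists h, in_N h /\ h *m v = w.
Proof.
case=> E0 E1 E2.
have [A [SpA Av]] := Sp_transitive E0.
have [d1 [d1u d1v]] := qunit_transitive E1.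
have [d2 [d2u d2v]] := qunit_transitive E2.
have Sp_scalar (d : Q) : d * qconj d = 1 -> is_Sp (d%:M : 'M[Q]_1).
  by move=> du; rewrite /is_Sp qadj_scalar -scalar_mxM du.
exists (blkdiag (blkdiag A d1%:M) d2%:M); split.
  by apply/in_NE; exists A, d1%:M, d2%:M; split => //; apply: Sp_scalar.
apply: col_eq_belast; last by rewrite blkdiag_mul_last mxE eqxx mulr1n d2v.
rewrite vbelast_blkdiag_mul; apply: col_eq_belast; last first.
  by rewrite blkdiag_mul_last mxE eqxx mulr1n d1v.
by rewrite vbelast_blkdiag_mul Av.
Qed.

End NormTriple.

Section Orbits.
Variable R : rcfType.
Local Notation Q := (quat R).

Lemma norms_eq_iff m (X Y : 'M[Q]_m.+3) :
  [/\ norm_v0 X = norm_v0 Y, norm_vn X = norm_vn Y & norm_vlast X = norm_vlast Y]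
  <-> norm_triple (vlast X) = norm_triple (vlast Y).
Proof.
have v0E (g : 'M[Q]_m.+3) :
    norm_v0 g = Num.sqrt (vnorm2 (vbelast (vbelast (vlast g)))).
  rewrite /norm_v0 /= (big_ord_narrow (leqW (leqnSn m.+1))); congr Num.sqrt.
  apply: eq_bigr => i _; rewrite qabs2 !mxE; congr (qnorm2 (g _ _)).
  exact: val_inj.
have vnE (g : 'M[Q]_m.+3) :
    norm_vn g = Num.sqrt (qnorm2 (vbelast (vlast g) ord_max 0)).
  rewrite /norm_vn /qabs !mxE; congr (Num.sqrt (qnorm2 (g _ _))).
  by apply: val_inj; rewrite /= inordK.
rewrite !v0E !vnE /norm_vlast /qabs /norm_triple.
split=> [[E0 E1 E2] | [-> -> ->]] //.
by congr (_, _, _); apply/eqP;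
  rewrite -eqr_sqrt ?vnorm2_ge0 ?qnorm2_ge0 ?E0 ?E1 ?E2 ?eqxx.
Qed.

Lemma same_orbitE n (g1 g2 h1 h2 : 'M[Q]_n.+1) : is_Sp g2 -> is_Sp h2 ->
  same_orbit (g1, g2) (h1, h2) <-> exists k h,
    [/\ in_K k, in_N h & qadj h2 *m h1 = h *m (qadj g2 *m g1) *m qadj k].
Proof.
move=> Spg2 Sph2; split.
  case=> g [k [h [Spg [Kk [Nh [/= -> ->]]]]]]; exists k, h; split => //.
  rewrite !qadjM qadjK.
  have -> : h *m (qadj g2 *m qadj g) *m (g *m g1 *m qadj k)
          = h *m (qadj g2 *m (qadj g *m g) *m g1) *m qadj k by rewrite !mulmxA.
  by rewrite Sp_mulVmx // mulmx1 !mulmxA.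
case=> k [h [Kk Nh EY]]; exists (h2 *m h *m qadj g2), k, h.
split; first exact: Sp_mul (Sp_mul Sph2 (in_N_Sp Nh)) (Sp_adj Spg2).
do 2!split => //; split => /=.
  have -> : h2 *m h *m qadj g2 *m g1 *m qadj k
          = h2 *m (h *m (qadj g2 *m g1) *m qadj k) by rewrite !mulmxA.
  by rewrite -EY mulmxA Sph2 mul1mx.
have -> : h2 *m h *m qadj g2 *m g2 *m qadj h
        = h2 *m (h *m (qadj g2 *m g2) *m qadj h) by rewrite !mulmxA.
by rewrite Sp_mulVmx // mulmx1 (in_N_Sp Nh) mulmx1.
Qed.

End Orbits.

Theorem proposition2p5 (R : realType) (n : nat) (hn : (2 <= n)%N)
    (g1 g2 h1 h2 : 'M[quat R]_n.+1) :
  is_Sp g1 -> is_Sp g2 -> is_Sp h1 -> is_Sp h2 ->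
  (same_orbit (g1, g2) (h1, h2) <->
   [/\ norm_v0 (qadj g2 *m g1) = norm_v0 (qadj h2 *m h1),
       norm_vn (qadj g2 *m g1) = norm_vn (qadj h2 *m h1) &
       norm_vlast (qadj g2 *m g1) = norm_vlast (qadj h2 *m h1)]).
Proof.
case: n hn g1 g2 h1 h2 => [|[|m]] // _ g1 g2 h1 h2 Spg1 Spg2 Sph1 Sph2.
rewrite same_orbitE // norms_eq_iff.
have SpX : is_Sp (qadj g2 *m g1) := Sp_mul (Sp_adj Spg2) Spg1.
have SpY : is_Sp (qadj h2 *m h1) := Sp_mul (Sp_adj Sph2) Sph1.
move: (qadj g2 *m g1) (qadj h2 *m h1) SpX SpY => X Y SpX SpY.
split=> [[k [h [[B [q [_ [Spq ->]]]] /in_NE [A [q1 [q2 [SpA Spq1 Spq2 ->]]]] ->]]] | E].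
  by rewrite vlast_mul_adj_blkdiag (norm_triple_mul_Sp1 _ (Sp_adj Spq)) vlast_mul
    norm_triple_N_mul.
have [h [Nh hX]] := norm_triple_N_transitive E.
have Sph := in_N_Sp Nh.
exists (qadj Y *m h *m X), h; split => //.
  apply: in_K_of_vlast; first exact: Sp_mul (Sp_mul (Sp_adj SpY) Sph) SpX.
  by rewrite vlast_mul -mulmxA hX -vlast_mul Sp_mulVmx.
by rewrite !qadjM qadjK !mulmxA -(mulmxA h) SpX mulmx1 Sph mul1mx.
Qed.
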